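(* Let $\mathbb{X}$ and $\mathbb{Y}$ be semi-abelian categories and let $I\colon \mathbb{X}\to\mathbb{Y}$ be a full and faithful protoadditive functor with a right adjoint $R\colon\mathbb{Y}\to\mathbb{X}$. If $\mathbb{Y}$ has generic split extensions (i.e. is action representable), then so does $\mathbb{X}$.
   Context: Semi-abelian: pointed, finitely complete and cocomplete, Barr-exact, Bourn-protomodular. A split extension is a diagram $X\xrightarrow{\kappa}A\rightleftarrows B$ with $\alpha\colon A\to B$, $\beta\colon B\to A$, $\alpha\beta=1_B$ and $\kappa$ a kernel of $\alpha$. A generic split extension with kernel $X$ is a split extension with kernel $X$ to which every split extension with kernel $X$ admits a unique morphism of split extensions that is the identity on $X$; a category has generic split extensions if one exists for every object $X$. A functor between pointed categories is protoadditive if it preserves split short exact sequences (split extensions). *)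

Record Category : Type := {
  Obj :> Type;
  Hom : Obj -> Obj -> Type;
  comp : forall x y z : Obj, Hom y z -> Hom x y -> Hom x z;
  idm : forall a : Obj, Hom a a;
  comp_assoc : forall a b c d (h : Hom c d) (g : Hom b c) (f : Hom a b),
      comp a c d h (comp a b c g f) = comp a b d (comp b c d h g) f;
  comp_id_l : forall a b (f : Hom a b), comp a b b (idm b) f = f;
  comp_id_r : forall a b (f : Hom a b), comp a a b f (idm a) = f
}.

Arguments Hom {_} _ _.
Arguments comp {_ x y z} _ _.
Arguments idm {_} _.

Notation "g ∘ f" := (comp g f) (at level 40, left associativity).

Record Functor (C D : Category) : Type := {
  fobj :> C -> D;
  fmap : forall a b : C, Hom a b -> Hom (fobj a) (fobj b);
  fmap_id : forall a : C, fmap a a (idm a) = idm (fobj a);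
  fmap_comp : forall a b c (g : Hom b c) (f : Hom a b),
      fmap a c (g ∘ f) = fmap b c g ∘ fmap a b f
}.

Arguments fmap {C D} _ {a b} _.

Section Basics.
Context {C : Category}.

Definition is_iso {a b : C} (f : Hom a b) : Prop :=
  exists g : Hom b a, g ∘ f = idm a /\ f ∘ g = idm b.

Definition is_initial (z : C) : Prop :=
  forall a : C, exists f : Hom z a, forall g : Hom z a, g = f.

Definition is_terminal (z : C) : Prop :=
  forall a : C, exists f : Hom a z, forall g : Hom a z, g = f.

Definition is_zero_obj (z : C) : Prop := is_initial z /\ is_terminal z.

Definition is_zero_mor {a b : C} (f : Hom a b) : Prop :=
  exists (z : C) (u : Hom a z) (v : Hom z b), is_zero_obj z /\ f = v ∘ u.

Definition is_pullback {A B X P : C} (f : Hom A X) (g : Hom B X)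
    (p1 : Hom P A) (p2 : Hom P B) : Prop :=
  f ∘ p1 = g ∘ p2 /\
  forall (T : C) (a : Hom T A) (b : Hom T B), f ∘ a = g ∘ b ->
    exists h : Hom T P, p1 ∘ h = a /\ p2 ∘ h = b /\
      forall h' : Hom T P, p1 ∘ h' = a -> p2 ∘ h' = b -> h' = h.

Definition is_pushout {A B X Q : C} (f : Hom X A) (g : Hom X B)
    (q1 : Hom A Q) (q2 : Hom B Q) : Prop :=
  q1 ∘ f = q2 ∘ g /\
  forall (T : C) (a : Hom A T) (b : Hom B T), a ∘ f = b ∘ g ->
    exists h : Hom Q T, h ∘ q1 = a /\ h ∘ q2 = b /\
      forall h' : Hom Q T, h' ∘ q1 = a -> h' ∘ q2 = b -> h' = h.

Definition is_coequalizer {R A Q : C} (u v : Hom R A) (q : Hom A Q) : Prop :=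
  q ∘ u = q ∘ v /\
  forall (T : C) (t : Hom A T), t ∘ u = t ∘ v ->
    exists h : Hom Q T, h ∘ q = t /\ forall h' : Hom Q T, h' ∘ q = t -> h' = h.

Definition is_regular_epi {A Q : C} (q : Hom A Q) : Prop :=
  exists (R : C) (u v : Hom R A), is_coequalizer u v q.

Definition is_kernel {K A B : C} (kappa : Hom K A) (alpha : Hom A B) : Prop :=
  is_zero_mor (alpha ∘ kappa) /\
  forall (T : C) (f : Hom T A), is_zero_mor (alpha ∘ f) ->
    exists g : Hom T K, kappa ∘ g = f /\
      forall g' : Hom T K, kappa ∘ g' = f -> g' = g.

Definition jointly_monic {R X : C} (r1 r2 : Hom R X) : Prop :=
  forall (T : C) (a b : Hom T R), r1 ∘ a = r1 ∘ b -> r2 ∘ a = r2 ∘ b -> a = b.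

Definition is_equiv_rel {R X : C} (r1 r2 : Hom R X) : Prop :=
  jointly_monic r1 r2 /\
  forall T : C,
    let rel := fun a b : Hom T X => exists h : Hom T R, r1 ∘ h = a /\ r2 ∘ h = b in
    (forall a, rel a a) /\ (forall a b, rel a b -> rel b a) /\
    (forall a b c, rel a b -> rel b c -> rel a c).

Definition is_effective {R X : C} (r1 r2 : Hom R X) : Prop :=
  exists (Y : C) (f : Hom X Y), is_pullback f f r1 r2.

Definition is_split_ext {K A B : C} (kappa : Hom K A) (alpha : Hom A B)
    (beta : Hom B A) : Prop :=
  alpha ∘ beta = idm B /\ is_kernel kappa alpha.

End Basics.


Definition pointed (C : Category) : Prop := exists z : C, is_zero_obj z.

Definition finitely_complete (C : Category) : Prop :=
  (exists t : C, is_terminal t) /\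
  forall (A B X : C) (f : Hom A X) (g : Hom B X),
    exists (P : C) (p1 : Hom P A) (p2 : Hom P B), is_pullback f g p1 p2.

Definition finitely_cocomplete (C : Category) : Prop :=
  (exists i : C, is_initial i) /\
  forall (A B X : C) (f : Hom X A) (g : Hom X B),
    exists (Q : C) (q1 : Hom A Q) (q2 : Hom B Q), is_pushout f g q1 q2.

Definition regular (C : Category) : Prop :=
  finitely_complete C /\
  (forall (A B P : C) (f : Hom A B) (p1 p2 : Hom P A),
      is_pullback f f p1 p2 -> exists (Q : C) (q : Hom A Q), is_coequalizer p1 p2 q) /\
  (forall (A B X P : C) (f : Hom A X) (g : Hom B X) (p1 : Hom P A) (p2 : Hom P B),
      is_pullback f g p1 p2 -> is_regular_epi f -> is_regular_epi p2).

Definition barr_exact (C : Category) : Prop :=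
  regular C /\
  forall (R X : C) (r1 r2 : Hom R X), is_equiv_rel r1 r2 -> is_effective r1 r2.

(* Bourn-protomodularity, in its standard form for pointed finitely complete
   categories: the split short five lemma. *)
Definition protomodular_pointed (C : Category) : Prop :=
  forall (K A B K' A' B' : C)
         (kappa : Hom K A) (alpha : Hom A B) (beta : Hom B A)
         (kappa' : Hom K' A') (alpha' : Hom A' B') (beta' : Hom B' A')
         (u : Hom K K') (v : Hom A A') (w : Hom B B'),
    is_split_ext kappa alpha beta -> is_split_ext kappa' alpha' beta' ->
    kappa' ∘ u = v ∘ kappa -> alpha' ∘ v = w ∘ alpha -> v ∘ beta = beta' ∘ w ->
    is_iso u -> is_iso w -> is_iso v.

Definition semi_abelian (C : Category) : Prop :=
  pointed C /\ finitely_complete C /\ finitely_cocomplete C /\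
  barr_exact C /\ protomodular_pointed C.

Definition is_generic_split_ext {C : Category} {X A B : C}
    (kappa : Hom X A) (alpha : Hom A B) (beta : Hom B A) : Prop :=
  is_split_ext kappa alpha beta /\
  forall (A' B' : C) (kappa' : Hom X A') (alpha' : Hom A' B') (beta' : Hom B' A'),
    is_split_ext kappa' alpha' beta' ->
    exists (f : Hom A' A) (g : Hom B' B),
      (f ∘ kappa' = kappa /\ alpha ∘ f = g ∘ alpha' /\ f ∘ beta' = beta ∘ g) /\
      forall (f' : Hom A' A) (g' : Hom B' B),
        f' ∘ kappa' = kappa -> alpha ∘ f' = g' ∘ alpha' -> f' ∘ beta' = beta ∘ g' ->
        f' = f /\ g' = g.

Definition has_generic_split_exts (C : Category) : Prop :=
  forall X : C, exists (A B : C) (kappa : Hom X A) (alpha : Hom A B) (beta : Hom B A),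
    is_generic_split_ext kappa alpha beta.

Definition full {C D : Category} (F : Functor C D) : Prop :=
  forall (a b : C) (g : Hom (F a) (F b)), exists f : Hom a b, fmap F f = g.

Definition faithful {C D : Category} (F : Functor C D) : Prop :=
  forall (a b : C) (f f' : Hom a b), fmap F f = fmap F f' -> f = f'.

Definition protoadditive {C D : Category} (F : Functor C D) : Prop :=
  forall (K A B : C) (kappa : Hom K A) (alpha : Hom A B) (beta : Hom B A),
    is_split_ext kappa alpha beta ->
    is_split_ext (fmap F kappa) (fmap F alpha) (fmap F beta).

Definition adjunction {C D : Category} (F : Functor C D) (G : Functor D C) : Prop :=
  exists (eta : forall a : C, Hom a (G (F a)))
         (eps : forall b : D, Hom (F (G b)) b),
    (forall (a a' : C) (f : Hom a a'), fmap G (fmap F f) ∘ eta a = eta a' ∘ f) /\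
    (forall (b b' : D) (g : Hom b b'), g ∘ eps b = eps b' ∘ fmap F (fmap G g)) /\
    (forall a : C, eps (F a) ∘ fmap F (eta a) = idm (F a)) /\
    (forall b : D, fmap G (eps b) ∘ eta (G b) = idm (G b)).


(* The right adjoint R carries a generic split extension of I x in Y to a
   split extension of R I x in X, and R I x is isomorphic to x through the
   unit because I is fully faithful.  Its universal property is transported
   through the adjunction: a split extension with kernel x is sent by the
   protoadditive functor I to a split extension with kernel I x, and morphisms
   out of it correspond bijectively, by transposition, to morphisms out of its
   image under I. *)

Section PointedCategory.
Context {C : Category}.

Lemma zero_mor_compl {a b c : C} (g : Hom b c) (f : Hom a b) :
  is_zero_mor f -> is_zero_mor (g ∘ f).
Proof.
  intros [z [u [v [Hz ->]]]]. exists z, u, (g ∘ v). split; [exact Hz | apply comp_assoc].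
Qed.

Lemma zero_mor_compr {a b c : C} (g : Hom b c) (f : Hom a b) :
  is_zero_mor g -> is_zero_mor (g ∘ f).
Proof.
  intros [z [u [v [Hz ->]]]]. exists z, (u ∘ f), v.
  split; [exact Hz | symmetry; apply comp_assoc].
Qed.

Lemma terminal_is_zero (t : C) : pointed C -> is_terminal t -> is_zero_obj t.
Proof.
  intros [z [z_init z_term]] t_term. split; [|exact t_term]. intro a.
  destruct (t_term z) as [r _], (z_term t) as [s _], (z_init a) as [u u_uniq].
  assert (rs : r ∘ s = idm t).
  { destruct (t_term t) as [i i_uniq]. now rewrite (i_uniq (r ∘ s)), (i_uniq (idm t)). }
  exists (u ∘ s). intro g.
  now rewrite <- (comp_id_r _ _ _ g), <- rs, comp_assoc, (u_uniq (g ∘ r)).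
Qed.

Lemma initial_is_zero (i : C) : pointed C -> is_initial i -> is_zero_obj i.
Proof.
  intros [z [z_init z_term]] i_init. split; [exact i_init|]. intro a.
  destruct (i_init z) as [s _], (z_init i) as [r _], (z_term a) as [u u_uniq].
  assert (rs : r ∘ s = idm i).
  { destruct (i_init i) as [j j_uniq]. now rewrite (j_uniq (r ∘ s)), (j_uniq (idm i)). }
  exists (r ∘ u). intro g.
  now rewrite <- (comp_id_l _ _ _ g), <- rs, <- comp_assoc, (u_uniq (s ∘ g)).
Qed.

Lemma kernel_comp_iso {K K' A B : C} (kappa : Hom K A) (alpha : Hom A B) (e : Hom K' K) :
  is_kernel kappa alpha -> is_iso e -> is_kernel (kappa ∘ e) alpha.
Proof.
  intros [kappa0 kappa_univ] [d [de ed]]. split.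
  - rewrite comp_assoc. now apply zero_mor_compr.
  - intros T f f0. destruct (kappa_univ T f f0) as [g [kg g_uniq]].
    exists (d ∘ g). split.
    + now rewrite <- comp_assoc, (comp_assoc _ _ _ _ _ e d), ed, comp_id_l.
    + intros g' kg'.
      rewrite <- (comp_id_l _ _ _ g'), <- de, <- comp_assoc.
      f_equal. apply g_uniq. now rewrite comp_assoc.
Qed.

End PointedCategory.

Lemma fmap_zero_mor {C D : Category} (F : Functor C D) :
  (forall z : C, is_zero_obj z -> is_zero_obj (F z)) ->
  forall (a b : C) (f : Hom a b), is_zero_mor f -> is_zero_mor (fmap F f).
Proof.
  intros F_zero a b f [z [u [v [Hz ->]]]].
  exists (F z), (fmap F u), (fmap F v). split; [now apply F_zero | apply fmap_comp].
Qed.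

Section Adjunction.
Context {X Y : Category} (I : Functor X Y) (R : Functor Y X).
Context (eta : forall a : X, Hom a (R (I a))) (eps : forall b : Y, Hom (I (R b)) b).
Hypothesis eta_nat : forall (a a' : X) (f : Hom a a'), fmap R (fmap I f) ∘ eta a = eta a' ∘ f.
Hypothesis eps_nat : forall (b b' : Y) (g : Hom b b'), g ∘ eps b = eps b' ∘ fmap I (fmap R g).
Hypothesis triangle_l : forall a : X, eps (I a) ∘ fmap I (eta a) = idm (I a).
Hypothesis triangle_r : forall b : Y, fmap R (eps b) ∘ eta (R b) = idm (R b).

Definition radj {a : X} {b : Y} (h : Hom (I a) b) : Hom a (R b) := fmap R h ∘ eta a.
Definition ladj {a : X} {b : Y} (h : Hom a (R b)) : Hom (I a) b := eps b ∘ fmap I h.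

Lemma radjK {a : X} {b : Y} (h : Hom (I a) b) : ladj (radj h) = h.
Proof.
  unfold ladj, radj.
  now rewrite fmap_comp, comp_assoc, <- eps_nat, <- comp_assoc, triangle_l, comp_id_r.
Qed.

Lemma ladjK {a : X} {b : Y} (h : Hom a (R b)) : radj (ladj h) = h.
Proof.
  unfold ladj, radj.
  now rewrite fmap_comp, <- comp_assoc, eta_nat, comp_assoc, triangle_r, comp_id_l.
Qed.

Lemma radj_postcomp {a : X} {b b' : Y} (g : Hom b b') (h : Hom (I a) b) :
  radj (g ∘ h) = fmap R g ∘ radj h.
Proof. unfold radj. now rewrite fmap_comp, comp_assoc. Qed.

Lemma radj_precomp {a a' : X} {b : Y} (h : Hom (I a) b) (f : Hom a' a) :
  radj (h ∘ fmap I f) = radj h ∘ f.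
Proof.
  unfold radj. now rewrite fmap_comp, <- comp_assoc, eta_nat, comp_assoc.
Qed.

Lemma ladj_postcomp {a : X} {b b' : Y} (g : Hom b b') (h : Hom a (R b)) :
  ladj (fmap R g ∘ h) = g ∘ ladj h.
Proof. unfold ladj. now rewrite fmap_comp, comp_assoc, comp_assoc, eps_nat. Qed.

Lemma ladj_precomp {a a' : X} {b : Y} (h : Hom a (R b)) (f : Hom a' a) :
  ladj (h ∘ f) = ladj h ∘ fmap I f.
Proof. unfold ladj. now rewrite fmap_comp, comp_assoc. Qed.

Lemma right_adjoint_zero_obj (z : Y) :
  pointed X -> is_zero_obj z -> is_zero_obj (R z).
Proof.
  intros PX [_ z_term]. apply terminal_is_zero; [exact PX|]. intro a.
  destruct (z_term (I a)) as [u u_uniq]. exists (radj u). intro g.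
  now rewrite <- (ladjK g), (u_uniq (ladj g)).
Qed.

Lemma left_adjoint_zero_obj (z : X) :
  pointed Y -> is_zero_obj z -> is_zero_obj (I z).
Proof.
  intros PY [z_init _]. apply initial_is_zero; [exact PY|]. intro b.
  destruct (z_init (R b)) as [u u_uniq]. exists (ladj u). intro g.
  now rewrite <- (radjK g), (u_uniq (radj g)).
Qed.

Lemma right_adjoint_kernel {K A B : Y} (kappa : Hom K A) (alpha : Hom A B) :
  pointed X -> pointed Y -> is_kernel kappa alpha -> is_kernel (fmap R kappa) (fmap R alpha).
Proof.
  intros PX PY [kappa0 kappa_univ].
  pose proof (fmap_zero_mor R (fun z => right_adjoint_zero_obj z PX)) as R_zero.
  pose proof (fmap_zero_mor I (fun z => left_adjoint_zero_obj z PY)) as I_zero.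
  split.
  - rewrite <- fmap_comp. now apply R_zero.
  - intros T f f0.
    assert (lf0 : is_zero_mor (alpha ∘ ladj f)).
    { rewrite <- ladj_postcomp. unfold ladj. apply zero_mor_compl, I_zero, f0. }
    destruct (kappa_univ _ _ lf0) as [g [kg g_uniq]].
    exists (radj g). split.
    + now rewrite <- radj_postcomp, kg, ladjK.
    + intros g' kg'. rewrite <- (ladjK g'). f_equal.
      apply g_uniq. now rewrite <- ladj_postcomp, kg'.
Qed.

Lemma unit_iso_of_fully_faithful (a : X) : full I -> faithful I -> is_iso (eta a).
Proof.
  intros I_full I_faithful.
  destruct (I_full _ _ (eps (I a))) as [r Ir].
  exists r. split.
  - apply I_faithful. now rewrite fmap_comp, fmap_id, Ir, triangle_l.
  - assert (eta_radj : eta a = radj (idm (I a))).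
    { unfold radj. now rewrite fmap_id, comp_id_l. }
    rewrite eta_radj, <- radj_precomp, comp_id_l, Ir. apply triangle_r.
Qed.

Lemma radj_split_ext (x : X) {A B : Y} (kappa : Hom (I x) A) (alpha : Hom A B)
    (beta : Hom B A) :
  pointed X -> pointed Y -> full I -> faithful I ->
  is_split_ext kappa alpha beta -> is_split_ext (radj kappa) (fmap R alpha) (fmap R beta).
Proof.
  intros PX PY I_full I_faithful [ab kappa_ker]. split.
  - now rewrite <- fmap_comp, ab, fmap_id.
  - apply kernel_comp_iso.
    + now apply right_adjoint_kernel.
    + now apply unit_iso_of_fully_faithful.
Qed.

Lemma radj_generic_split_ext (x : X) {A B : Y} (kappa : Hom (I x) A) (alpha : Hom A B)
    (beta : Hom B A) :
  protoadditive I -> is_generic_split_ext kappa alpha beta ->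
  is_split_ext (radj kappa) (fmap R alpha) (fmap R beta) ->
  is_generic_split_ext (radj kappa) (fmap R alpha) (fmap R beta).
Proof.
  intros I_pa [_ univ] split_ext. split; [exact split_ext|].
  intros A' B' kappa' alpha' beta' split_ext'.
  destruct (univ _ _ _ _ _ (I_pa _ _ _ _ _ _ split_ext'))
    as [f [g [[fk [af fb]] fg_uniq]]].
  exists (radj f), (radj g). split; [split; [|split]|].
  - now rewrite <- radj_precomp, fk.
  - now rewrite <- radj_postcomp, af, radj_precomp.
  - now rewrite <- radj_precomp, fb, radj_postcomp.
  - intros f' g' fk' af' fb'.
    destruct (fg_uniq (ladj f') (ladj g')) as [Ef Eg].
    + now rewrite <- ladj_precomp, fk', radjK.
    + now rewrite <- ladj_postcomp, af', ladj_precomp.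
    + now rewrite <- ladj_precomp, fb', ladj_postcomp.
    + now rewrite <- (ladjK f'), <- (ladjK g'), Ef, Eg.
Qed.

End Adjunction.

Theorem proposition2p9 (X Y : Category) (I : Functor X Y) (R : Functor Y X) :
  semi_abelian X -> semi_abelian Y ->
  full I -> faithful I -> protoadditive I -> adjunction I R ->
  has_generic_split_exts Y -> has_generic_split_exts X.
Proof.
  intros [PX _] [PY _] I_full I_faithful I_pa
    [eta [eps [eta_nat [eps_nat [triangle_l triangle_r]]]]] Y_gen x.
  destruct (Y_gen (I x)) as (A & B & kappa & alpha & beta & gen).
  exists (R A), (R B), (radj I R eta kappa), (fmap R alpha), (fmap R beta).
  apply (radj_generic_split_ext I R eta eps); try assumption.
  apply (radj_split_ext I R eta eps); try assumption.
  apply gen.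
Qed.
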